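(* Let $N,B,W,T$ be positive integers with $N\le B$, $B+1\le W$ and $T\ge B$, and set $T_{\mathrm{eff}}=\min(T,W-1)$. Then there exists a streaming code of some rate $R$ with delay $T$ over the channel $\mathcal{C}(N,B,W)$ such that \[ \left(\frac{R}{1-R}\right)B+N> T_{\mathrm{eff}} . \]
   Context: Channel $\mathcal{C}(N,B,W)$: a packet erasure channel on a sequence of channel uses $i=0,1,2,\dots$ such that in every sliding window of $W$ consecutive channel uses, the set of erased positions is either a single burst of consecutive erasures of length at most $B$, or consists of at most $N$ erasures in arbitrary positions. Streaming code (equal source–channel rates): at each time $i\ge 0$ the encoder observes a source symbol $\mathbf{s}[i]\in\mathbb{F}_q^k$ and transmits $\mathbf{x}[i]=f_i(\mathbf{s}[0],\dots,\mathbf{s}[i])\in\mathbb{F}_q^n$ over some finite field $\mathbb{F}_q$; the channel output is $\mathbf{y}[i]=\mathbf{x}[i]$ or $\mathbf{y}[i]=\star$ (erasure). The code has delay $T$ over the channel if there are decoding functions with $\mathbf{s}[i]=g_i(\mathbf{y}[0],\dots,\mathbf{y}[i+T])$ for every $i\ge0$, every source sequence and every erasure pattern allowed by the channel. Its rate is $R=k/n$. *)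

From HB Require Import structures.
From mathcomp Require Import all_boot all_order all_algebra all_field.
Set Implicit Arguments. Unset Strict Implicit. Unset Printing Implicit Defensive.
Import Order.TTheory GRing.Theory Num.Theory.

(* An erasure pattern: e j = true iff channel use j is erased. *)
Definition erasure_pattern := nat -> bool.

Definition admissible (N B W : nat) (e : erasure_pattern) : Prop :=
  forall t : nat,
    (exists a l : nat, l <= B /\
       forall j, t <= j < t + W -> e j = (a <= j < a + l))
    \/ (\sum_(t <= j < t + W) (e j : nat) <= N).

Definition encoder (F : finFieldType) (k n : nat) :=
  forall i : nat, ('I_i.+1 -> 'rV[F]_k) -> 'rV[F]_n.

(* Decoder: g_i maps (y[0],...,y[i+T]) to an estimate of s[i];
   None stands for an erasure (the symbol star). *)
Definition decoder (F : finFieldType) (k n T : nat) :=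
  forall i : nat, ('I_(i + T).+1 -> option 'rV[F]_n) -> 'rV[F]_k.

Definition chan_out (F : finFieldType) (k n : nat) (f : encoder F k n)
  (s : nat -> 'rV[F]_k) (e : erasure_pattern) (j : nat) : option 'rV[F]_n :=
  if e j then None else Some (f j (fun m : 'I_j.+1 => s (nat_of_ord m))).

Definition has_delay_over (F : finFieldType) (k n T N B W : nat)
  (f : encoder F k n) (g : decoder F k n T) : Prop :=
  forall (s : nat -> 'rV[F]_k) (e : erasure_pattern),
    admissible N B W e ->
    forall i : nat,
      g i (fun m : 'I_(i + T).+1 => chan_out f s e (nat_of_ord m)) = s i.

Definition T_eff (T W : nat) : nat := minn T W.-1.

From HB Require Import structures.
From mathcomp Require Import all_boot all_order all_algebra all_field.
From mathcomp Require Import zify ring lra.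
Import Order.TTheory GRing.Theory Num.Theory.

(* Let tau = T_eff. A source packet consists of c = tau + 1 - N blocks of tau
   symbols; the first B symbols of a block form its u-part, the other tau - B
   its v-part. Besides the source symbols, a channel packet carries the
   parities of a diagonally interleaved [tau, tau - B] Reed-Solomon code on
   the v-parts, each added to a u-symbol repeated from tau steps earlier, and
   the parities of a diagonally interleaved [tau + 1, c] Reed-Solomon code on
   the u-parts.

   By linearity it suffices to show that a source vanishing before time i,
   whose packets vanish at the unerased times of [i, i + tau], vanishes at
   time i. The window [i, i + tau] is shorter than W, so it holds a burst of
   length at most B or at most N <= B erasures; either way the v-code
   recovers the v-part. After at most N isolated erasures the u-code recovers
   the u-part. After a burst, the v-symbols entering the parity sent at time
   i + tau all arrive after the burst, so that parity can be cancelled and the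
   repeated u-symbol read off.

   Finally k / (n - k) = c tau / ((tau + 1) B), whence
   R / (1 - R) B + N = tau + N / (tau + 1) > tau. *)

Lemma count_le_size_inj {T1 T2 : eqType} (a : pred T1) (f : T1 -> T2)
    {s1 : seq T1} (s2 : seq T2) :
  uniq s1 -> {in s1 &, forall x y, a x -> a y -> f x = f y -> x = y} ->
  {in s1, forall x, a x -> f x \in s2} ->
  count a s1 <= size s2.
Proof.
move=> s1_uniq f_inj f_in; rewrite -size_filter -(size_map f).
apply: uniq_leq_size.
  rewrite map_inj_in_uniq ?filter_uniq // => x y.
  rewrite !mem_filter => /andP[ax xs] /andP[ay ys]; exact: f_inj.
move=> y /mapP[x]; rewrite mem_filter => /andP[ax xs] ->; exact: f_in.
Qed.

Section ReedSolomon.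
Local Open Scope ring_scope.
Context {F : finFieldType}.

Definition rs_point (j : nat) : F := nth 0 (enum F) j.

Lemma rs_point_inj i j : (i < #|F|)%N -> (j < #|F|)%N ->
  rs_point i = rs_point j -> i = j.
Proof.
move=> hi hj /eqP; rewrite /rs_point nth_uniq ?enum_uniq -?cardT //.
by move/eqP.
Qed.

Definition lagrange (K a : nat) : {poly F} :=
  (\prod_(0 <= b < K | b != a) (rs_point a - rs_point b))^-1
    *: \prod_(0 <= b < K | b != a) ('X - (rs_point b)%:P).

Definition rs_poly (K : nat) (msg : nat -> F) : {poly F} :=
  \sum_(a < K) msg a *: lagrange K a.

(* Systematic Reed-Solomon code: the message is interpolated at the first [K]
   points. *)
Definition rs_encode (K : nat) (msg : nat -> F) (j : nat) : F :=
  (rs_poly K msg).[rs_point j].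

Lemma size_lagrange K a : (a < K)%N -> (size (lagrange K a) <= K)%N.
Proof.
move=> aK; rewrite (leq_trans (size_scale_leq _ _)) //.
rewrite -big_filter size_prod_XsubC size_filter /index_iota subn0.
have := count_predC (pred1 a) (iota 0 K).
rewrite (count_uniq_mem _ (iota_uniq 0 K)) mem_iota /= aK size_iota => cntK.
by rewrite -[in X in (_ <= X)%N]cntK.
Qed.

Lemma size_rs_poly K msg : (size (rs_poly K msg) <= K)%N.
Proof.
rewrite (leq_trans (size_sum _ _ _)) //; apply/bigmax_leqP => a _.
exact: leq_trans (size_scale_leq _ _) (size_lagrange _ _ (ltn_ord a)).
Qed.

Lemma horner_lagrange K a j : (K <= #|F|)%N -> (a < K)%N -> (j < K)%N ->
  (lagrange K a).[rs_point j] = (a == j)%:R.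
Proof.
move=> KF aK jK; rewrite hornerZ horner_prod.
under [X in _ * X]eq_bigr => b _ do rewrite hornerXsubC.
have [<-|/negPf neq_aj] := eqVneq a j.
  rewrite mulVf // prodf_seq_neq0; apply/allP => b.
  rewrite mem_index_iota => /andP[_ bK]; apply/implyP => ba.
  rewrite subr_eq0; apply: contra ba => /eqP /rs_point_inj -> //.
  - exact: leq_trans aK KF.
  - exact: leq_trans bK KF.
rewrite [X in _ * X]big_mkcond [X in _ * X](bigD1_seq j) ?mem_index_iota ?iota_uniq //=.
by rewrite eq_sym neq_aj subrr mul0r mulr0.
Qed.

Lemma rs_encode_sys K msg j : (K <= #|F|)%N -> (j < K)%N ->
  rs_encode K msg j = msg j.
Proof.
move=> KF jK; rewrite /rs_encode /rs_poly horner_sum (bigD1 (Ordinal jK)) //=.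
rewrite hornerZ horner_lagrange // eqxx mulr1 big1 ?addr0 // => a /eqP aj.
rewrite hornerZ horner_lagrange //; case: eqP => [a_j|]; last by rewrite mulr0.
by case: aj; apply: val_inj.
Qed.

Lemma eq_rs_encode K msg1 msg2 : (forall a, (a < K)%N -> msg1 a = msg2 a) ->
  rs_encode K msg1 =1 rs_encode K msg2.
Proof.
by move=> eq_msg j; rewrite /rs_encode /rs_poly; congr horner;
  apply: eq_bigr => a _; rewrite eq_msg.
Qed.

Lemma rs_encode0 K msg j : (forall a, (a < K)%N -> msg a = 0) ->
  rs_encode K msg j = 0.
Proof.
move=> msg0; rewrite (@eq_rs_encode K msg (fun => 0)) // /rs_encode /rs_poly.
by rewrite big1 ?horner0 // => a _; rewrite scale0r.
Qed.

Lemma rs_encodeB K msg1 msg2 j :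
  rs_encode K (fun a => msg1 a - msg2 a) j = rs_encode K msg1 j - rs_encode K msg2 j.
Proof.
by rewrite /rs_encode /rs_poly -hornerN -hornerD -sumrB; congr horner;
  apply: eq_bigr => a _; rewrite scalerBl.
Qed.

Lemma rs_encode_mds K L msg (erased : pred nat) : (K <= L)%N -> (L <= #|F|)%N ->
  (forall j, (j < L)%N -> ~~ erased j -> rs_encode K msg j = 0) ->
  (count erased (iota 0 L) <= L - K)%N ->
  forall a, (a < K)%N -> msg a = 0.
Proof.
move=> KL LF cw0 few_erased a aK.
rewrite -(@rs_encode_sys K msg a (leq_trans KL LF) aK).
suff P0 : rs_poly K msg = 0 by rewrite /rs_encode P0 horner0.
apply/eqP; apply: contraT => nz.
pose roots := map rs_point (filter (predC erased) (iota 0 L)).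
have roots_uniq : uniq roots.
  rewrite map_inj_in_uniq ?filter_uniq ?iota_uniq // => x y.
  rewrite !mem_filter !mem_iota /= => /andP[_ xL] /andP[_ yL].
  by apply: rs_point_inj; apply: leq_trans LF.
have all_roots : all (root (rs_poly K msg)) roots.
  apply/allP => x /mapP[j]; rewrite mem_filter mem_iota /= => /andP[nj jL] ->.
  exact/eqP/cw0.
have := max_poly_roots nz all_roots roots_uniq.
rewrite size_map size_filter => /leq_trans/(_ (size_rs_poly K msg)).
have := count_predC erased (iota 0 L); rewrite size_iota; lia.
Qed.

End ReedSolomon.

Section ErasureWindow.
Variables (e : erasure_pattern) (i tau : nat).

Lemma count_shifted_window m L : L <= tau.+1 ->
  count (fun j => (m <= j) && e (i + j - m)) (iota 0 L) <= count e (iota i tau.+1).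
Proof.
move=> L_le; rewrite -[X in _ <= X]size_filter.
apply: (count_le_size_inj _ (fun j => i + j - m) _ (iota_uniq 0 L)).
  by move=> x y _ _ /andP[mx _] /andP[my _]; lia.
by move=> j; rewrite mem_iota => jL /andP[mj ej]; rewrite mem_filter ej mem_iota; lia.
Qed.

Lemma count_burst_window B : (forall t, i <= t <= i + tau -> e t -> t < i + B) ->
  count e (iota i tau.+1) <= B.
Proof.
move=> burst; rewrite -[X in _ <= X](size_iota i B).
apply: (count_le_size_inj _ id _ (iota_uniq i tau.+1)) => // t.
by rewrite !mem_iota => t_in et; have := burst t ltac:(lia) et; lia.
Qed.

Lemma count_window_le_sum W : tau < W ->
  count e (iota i tau.+1) <= \sum_(i <= j < i + W) e j.
Proof.
move=> tauW.
have sum_count s : \sum_(j <- s) (e j : nat) = count e s.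
  by elim: s => [|x s IH]; rewrite ?big_nil ?big_cons ?IH.
rewrite sum_count /index_iota addKn (_ : W = tau.+1 + (W - tau.+1)); last lia.
by rewrite iotaD count_cat leq_addr.
Qed.

Lemma burst_erased_lt {W a l B : nat} : l <= B -> e i ->
  (forall j, i <= j < i + W -> e j = (a <= j < a + l)) ->
  forall t, i <= t < i + W -> e t -> t < i + B.
Proof.
move=> lB ei burst t t_in; rewrite burst //.
by move: ei; rewrite burst ?leqnn ?addn1 //; lia.
Qed.

End ErasureWindow.

Section Code.
Local Open Scope ring_scope.
Context {F : finFieldType} (tau B N : nat).

Definition nblocks := (tau.+1 - N)%N.
Definition src_dim := (nblocks * tau)%N.
Definition pkt_dim := (src_dim + nblocks * B + N * B)%N.

Local Notation c := nblocks.
Local Notation k := src_dim.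
Local Notation n := pkt_dim.

Definition v_diag (S : int -> nat -> F) (l : nat) (t0 : int) (m : nat) : F :=
  S (t0 + (B + m)%:Z) (l * tau + B + m)%N.

Definition u_diag (S : int -> nat -> F) (beta : nat) (d : int) (a : nat) : F :=
  S (d + a%:Z) (a * tau + beta)%N.

(* [S t o] is source symbol [o] at time [t], and symbol [l * tau + m] is
   symbol [m] of block [l]. After the [k] source symbols come the v-code
   parities (plus repeated u-symbols), indexed by [l * B + b], then the u-code
   parities, indexed by [a * B + beta]. *)
Definition pkt (S : int -> nat -> F) (t : int) (o : nat) : F :=
  if (o < k)%N then S t o
  else if (o < k + c * B)%N then
    let l := ((o - k) %/ B)%N in let b := ((o - k) %% B)%N in
    rs_encode (tau - B)%N (v_diag S l (t - (tau + b)%:Z)) (tau - B + b)%N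
      + S (t - tau%:Z) (l * tau + b)%N
  else
    let a := ((o - k - c * B) %/ B)%N in let beta := ((o - k - c * B) %% B)%N in
    rs_encode c (u_diag S beta (t - (c + a)%:Z)) (c + a)%N.

Lemma pkt_sys S t o : (o < k)%N -> pkt S t o = S t o.
Proof. by rewrite /pkt => ->. Qed.

Lemma pkt_vparity S t0 l b : (l < c)%N -> (b < B)%N ->
  pkt S (t0 + (tau + b)%:Z) (k + l * B + b)
  = rs_encode (tau - B)%N (v_diag S l t0) (tau - B + b)%N + S (t0 + b%:Z) (l * tau + b)%N.
Proof.
move=> lc bB; rewrite /pkt ifF ?ifT /=; [|nia|lia].
rewrite (_ : k + l * B + b - k = l * B + b)%N; last lia.
rewrite divnMDl ?modnMDl ?(divn_small bB) ?(modn_small bB) ?addn0; last lia.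
by congr (_ + S _ _); [congr rs_encode; congr v_diag|]; lia.
Qed.

Lemma pkt_uparity S d a beta : (a < N)%N -> (beta < B)%N ->
  pkt S (d + (c + a)%:Z) (k + c * B + a * B + beta) = rs_encode c (u_diag S beta d) (c + a)%N.
Proof.
move=> aN betaB; rewrite /pkt ifF ?ifF /=; [|lia|lia].
rewrite (_ : k + c * B + a * B + beta - k - c * B = a * B + beta)%N; last lia.
rewrite divnMDl ?modnMDl ?(divn_small betaB) ?(modn_small betaB) ?addn0; last lia.
by congr rs_encode; congr u_diag; lia.
Qed.

Lemma pktB (S1 S2 : int -> nat -> F) (t : int) o :
  pkt (fun t o => S1 t o - S2 t o) t o = pkt S1 t o - pkt S2 t o.
Proof.
rewrite /pkt; case: ifP => // _; case: ifP => _ /=; last by rewrite -rs_encodeB.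
by rewrite opprD addrACA -rs_encodeB.
Qed.

Lemma pkt_causal (S1 S2 : int -> nat -> F) (t : int) o : (forall t' o', t' <= t -> S1 t' o' = S2 t' o') ->
  pkt S1 t o = pkt S2 t o.
Proof.
move=> eqS; rewrite /pkt; case: ifP => _; first exact: eqS.
case: ifP => _ /=.
  by congr (_ + _); [apply: eq_rs_encode => m m_lt; rewrite /v_diag|]; rewrite eqS //; lia.
apply: eq_rs_encode => a a_lt; rewrite /u_diag eqS //.
by move: (_ %/ B)%N => q; lia.
Qed.

Lemma pkt0 t o : pkt (fun _ _ => 0) t o = 0.
Proof. by rewrite /pkt; case: ifP => // _; case: ifP => _; rewrite rs_encode0 ?addr0. Qed.

Definition pkt_zero (S : int -> nat -> F) (t : int) :=
  forall o, (o < n)%N -> pkt S t o = 0.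

Section Recovery.
Hypotheses (N_gt0 : (0 < N)%N) (N_le_B : (N <= B)%N) (B_le_tau : (B <= tau)%N).
Hypothesis tau_lt_F : (tau < #|F|)%N.
Variables (S : int -> nat -> F) (i : nat) (e : erasure_pattern).
Hypothesis S_past : forall (t : int) o, t < i%:Z -> S t o = 0.
Hypothesis pkt_unerased : forall t : nat, (i <= t <= i + tau)%N -> ~~ e t -> pkt_zero S t.

Lemma pkt_zero_at (t : int) : t <= (i + tau)%N%:Z ->
  (forall t' : nat, t = t'%:Z -> (i <= t')%N -> ~~ e t') -> pkt_zero S t.
Proof.
move=> t_le unerased o o_lt; have [t_lt|] := ltP t i%:Z.
  by rewrite (@pkt_causal S (fun _ _ => 0)) ?pkt0 // => t' o' t't; apply: S_past; lia.
case: t t_le unerased => [t|//] t_le unerased it; apply: pkt_unerased => //; last exact: unerased.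
by move: t_le it; rewrite !lez_nat => -> ->.
Qed.

Lemma v_codeword_zero l t0 j : (l < c)%N -> (j < tau)%N ->
  pkt_zero S (t0 + (B + j)%:Z) -> ((tau - B <= j)%N -> t0 + (j - (tau - B))%:Z < i%:Z) ->
  rs_encode (tau - B) (v_diag S l t0) j = 0.
Proof.
move=> lc jt pz repeat_past; have [jB|jB] := ltnP j (tau - B).
  rewrite rs_encode_sys; [|lia|lia].
  have o_lt : (l * tau + B + j < k)%N by rewrite /src_dim; nia.
  by rewrite /v_diag -pkt_sys // pz //; rewrite /pkt_dim; lia.
pose b := (j - (tau - B))%N.
have := pz (k + l * B + b)%N; rewrite (_ : t0 + (B + j)%:Z = t0 + (tau + b)%:Z); last first.
  by rewrite /b; lia.
rewrite pkt_vparity ?S_past ?addr0; [|by apply: repeat_past|lia|lia].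
by rewrite (_ : tau - B + b = j)%N; [apply; rewrite /pkt_dim; nia | rewrite /b; lia].
Qed.

Lemma u_codeword_zero beta d j : (beta < B)%N -> (j <= tau)%N ->
  pkt_zero S (d + j%:Z) -> rs_encode c (u_diag S beta d) j = 0.
Proof.
move=> betaB jt pz; have [jc|jc] := ltnP j c.
  rewrite rs_encode_sys; [|rewrite /nblocks; lia|lia].
  have o_lt : (j * tau + beta < k)%N by rewrite /src_dim; nia.
  by rewrite /u_diag -pkt_sys // pz //; rewrite /pkt_dim; lia.
pose a := (j - c)%N.
have := pz (k + c * B + a * B + beta)%N.
rewrite (_ : d + j%:Z = d + (c + a)%:Z); last by rewrite /a; lia.
rewrite pkt_uparity; [|rewrite /a /nblocks in jc *; lia|lia].
by rewrite (_ : c + a = j)%N; [apply; rewrite /pkt_dim /a /nblocks in jc *; nia | rewrite /a; lia].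
Qed.

Lemma recover_v : (count e (iota i tau.+1) <= B)%N ->
  forall l m, (l < c)%N -> (m < tau - B)%N -> S i%:Z (l * tau + B + m)%N = 0.
Proof.
move=> few l m lc m_lt.
pose t0 := i%:Z - (B + m)%:Z.
have -> : i%:Z = t0 + (B + m)%:Z by rewrite /t0; lia.
apply: (@rs_encode_mds F (tau - B) tau (v_diag S l t0)
  (fun j => (m <= j) && e (i + j - m))%N); [lia|lia| | |exact: m_lt].
- move=> j jt unerased; apply: v_codeword_zero => //; last by rewrite /t0; lia.
  apply: pkt_zero_at; first by rewrite /t0; lia.
  move=> t' t'_eq it'; have mj : (m <= j)%N by rewrite /t0 in t'_eq; lia.
  rewrite (_ : t' = i + j - m)%N; last by rewrite /t0 in t'_eq; lia.
  by move: unerased; rewrite mj.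
- rewrite (_ : tau - (tau - B) = B)%N; last lia.
  exact: leq_trans (count_shifted_window _ _ _ _ _ _) few.
Qed.

Lemma recover_u_isolated : (count e (iota i tau.+1) <= N)%N ->
  forall a beta, (a < c)%N -> (beta < B)%N -> S i%:Z (a * tau + beta)%N = 0.
Proof.
move=> few a beta ac betaB.
pose d := i%:Z - a%:Z.
have -> : i%:Z = d + a%:Z by rewrite /d; lia.
apply: (@rs_encode_mds F c tau.+1 (u_diag S beta d)
  (fun j => (a <= j) && e (i + j - a))%N); [rewrite /nblocks; lia|lia| | |exact: ac].
- move=> j jt unerased; apply: u_codeword_zero => //.
  apply: pkt_zero_at; first by rewrite /d /nblocks in ac *; lia.
  move=> t' t'_eq it'; have aj : (a <= j)%N by rewrite /d in t'_eq; lia.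
  rewrite (_ : t' = i + j - a)%N; last by rewrite /d in t'_eq; lia.
  by move: unerased; rewrite aj.
- rewrite (_ : tau.+1 - c = N)%N; last by rewrite /nblocks; lia.
  exact: leq_trans (count_shifted_window _ _ _ _ _ _) few.
Qed.

Lemma recover_u_burst : (forall t, (i <= t <= i + tau)%N -> e t -> (t < i + B)%N) ->
  forall l b, (l < c)%N -> (b < B)%N -> S i%:Z (l * tau + b)%N = 0.
Proof.
move=> burst l b lc bB.
pose t0 := i%:Z - b%:Z.
have v0 m : (m < tau - B)%N -> v_diag S l t0 m = 0.
  apply: (@rs_encode_mds F (tau - B) tau _
    (fun j => (j < b) || (tau - B + b <= j))%N); [lia|lia| |].
    move=> j jt; rewrite negb_or -leqNgt -ltnNge => /andP[bj j_lt].
    apply: v_codeword_zero => //; last by rewrite /t0; lia.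
    apply: pkt_zero_at; first by rewrite /t0; lia.
    move=> t' t'_eq _; apply/negP => et'.
    have := burst t' ltac:(rewrite /t0 in t'_eq; lia) et'; rewrite /t0 in t'_eq; lia.
  rewrite (_ : tau - (tau - B) = B)%N; last lia.
  apply: (@leq_trans (size (iota 0 b ++ iota (tau - B + b) (B - b)))); last first.
    by rewrite size_cat !size_iota; lia.
  apply: (count_le_size_inj _ id _ (iota_uniq 0 tau)) => // j.
  by rewrite mem_iota mem_cat !mem_iota => j_lt /orP[]; lia.
have pz : pkt_zero S (t0 + (tau + b)%:Z).
  rewrite (_ : t0 + _ = (i + tau)%N%:Z); last by rewrite /t0; lia.
  by apply: pkt_unerased; [lia | apply/negP => /burst; lia].
have := pz (k + l * B + b)%N; rewrite pkt_vparity // rs_encode0 // add0r.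
rewrite (_ : t0 + b%:Z = i%:Z); last by rewrite /t0; lia.
by apply; rewrite /pkt_dim; nia.
Qed.

Lemma decode_step W : (tau < W)%N -> admissible N B W e ->
  forall o, (o < k)%N -> S i%:Z o = 0.
Proof.
move=> tauW adm o o_lt.
have [ei|nei] := boolP (e i); last first.
  by rewrite -pkt_sys // pkt_unerased //; [lia | rewrite /pkt_dim; lia].
have [few u0] : (count e (iota i tau.+1) <= B)%N /\
    forall l b, (l < c)%N -> (b < B)%N -> S i%:Z (l * tau + b)%N = 0.
  case: (adm i) => [[a [len [lenB burst]]] | sparse].
    have burst' t : (i <= t <= i + tau)%N -> e t -> (t < i + B)%N.
      by move=> t_in; apply: (burst_erased_lt _ _ lenB ei burst); lia.
    by split; [exact: count_burst_window | exact: recover_u_burst].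
  have fewN := leq_trans (count_window_le_sum _ _ _ _ tauW) sparse.
  by split; [exact: leq_trans fewN N_le_B | exact: recover_u_isolated].
have tau_gt0 : (0 < tau)%N by lia.
have l_lt : (o %/ tau < c)%N by rewrite ltn_divLR.
rewrite (divn_eq o tau); have [m_lt|m_ge] := ltnP (o %% tau) B; first exact: u0.
rewrite -(subnKC m_ge) addnA; apply: recover_v => //.
by have := ltn_pmod o tau_gt0; lia.
Qed.

End Recovery.
End Code.

Section Streaming.
Local Open Scope ring_scope.
Context {F : finFieldType} (tau B N T : nat).
Hypotheses (N_gt0 : (0 < N)%N) (N_le_B : (N <= B)%N) (B_le_tau : (B <= tau)%N).
Hypothesis tau_lt_F : (tau < #|F|)%N.

Local Notation k := (src_dim tau N).
Local Notation n := (pkt_dim tau B N).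

Definition row_at (v : 'rV[F]_k) (o : nat) : F :=
  if insub o is Some o' then v ord0 o' else 0.

Definition src_of (s : nat -> 'rV[F]_k) (t : int) (o : nat) : F :=
  if t is Posz t' then row_at (s t') o else 0.

Definition prefix_ext {j} (h : 'I_j.+1 -> 'rV[F]_k) (t : nat) : 'rV[F]_k :=
  if (t <= j)%N then h (inord t) else 0.

Definition stream_enc : encoder F k n :=
  fun j h => \row_(o < n) pkt tau B N (src_of (prefix_ext h)) j%:Z o.

Lemma stream_enc_src j (h : 'I_j.+1 -> 'rV[F]_k) (s : nat -> 'rV[F]_k) :
  (forall m : 'I_j.+1, h m = s m) ->
  stream_enc j h = \row_(o < n) pkt tau B N (src_of s) j%:Z o.
Proof.
move=> eq_hs; apply/rowP => o; rewrite !mxE; apply: pkt_causal => -[t'|//] o'.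
by rewrite lez_nat /= /prefix_ext => t_le; rewrite t_le eq_hs inordK.
Qed.

Definition consistent {i} (s' : {ffun 'I_(i + T).+1 -> 'rV[F]_k})
    (y : 'I_(i + T).+1 -> option 'rV[F]_n) : bool :=
  [forall m : 'I_(i + T).+1, (y m == None) ||
     (y m == Some (stream_enc m (fun m' : 'I_m.+1 => s' (inord m'))))].

Definition stream_dec : decoder F k n T := fun i y =>
  if [pick s' | consistent s' y] is Some s' then s' (inord i) else 0.

Lemma src_eq_of_pkt_eq W H (s1 s2 : nat -> 'rV[F]_k) (e : erasure_pattern) :
  (tau < W)%N -> admissible N B W e ->
  (forall t : nat, (t <= H)%N -> ~~ e t -> forall o, (o < n)%N ->
     pkt tau B N (src_of s1) t o = pkt tau B N (src_of s2) t o) ->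
  forall j, (j + tau <= H)%N -> s1 j = s2 j.
Proof.
move=> tauW adm eq_pkt.
pose D t o := src_of s1 t o - src_of s2 t o.
have D_out t o : (k <= o)%N -> D t o = 0.
  by case: t => [t|t] o_ge; rewrite /D /= ?subrr // /row_at !insubN ?subrr // -leqNgt.
suff D0 j : (j + tau <= H)%N -> forall o, (o < k)%N -> D j o = 0.
  move=> j jH; apply/rowP => o; have := D0 j jH o (ltn_ord o).
  by rewrite /D /= /row_at valK => /eqP; rewrite subr_eq0 => /eqP.
elim/ltn_ind: j => j IH jH o o_lt.
apply: (decode_step tau B N N_gt0 N_le_B B_le_tau tau_lt_F D j e _ _ W tauW adm) => //.
  move=> [t|t] o' t_lt; last by rewrite /D /= subrr.
  have [o'_lt|] := ltnP o' k; last exact: D_out.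
  by apply: IH => //; lia.
move=> t t_in et o' o'_lt.
by rewrite pktB eq_pkt ?subrr //; lia.
Qed.

Lemma stream_dec_correct W (s : nat -> 'rV[F]_k) (e : erasure_pattern) :
  (tau <= T)%N -> (tau < W)%N -> admissible N B W e ->
  forall i, stream_dec i (fun m : 'I_(i + T).+1 => chan_out stream_enc s e m) = s i.
Proof.
move=> tauT tauW adm i; set y := fun m => _.
have consistent_s : consistent [ffun m : 'I_(i + T).+1 => s m] y.
  apply/forallP => m; rewrite /y /chan_out; case: (e m) => //=.
  rewrite (stream_enc_src _ _ s) // (stream_enc_src _ _ s) ?eqxx ?orbT // => m'.
  by rewrite ffunE inordK //; have := ltn_ord m'; have := ltn_ord m; lia.
rewrite /stream_dec; case: pickP => [s' consistent_s'|]; last first.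
  by move/(_ [ffun m : 'I_(i + T).+1 => s m]); rewrite consistent_s.
pose s2 t := if (t < (i + T).+1)%N then s' (inord t) else 0.
suff -> : s i = s2 i by rewrite /s2 ifT // ltnS leq_addr.
apply: (src_eq_of_pkt_eq W (i + T) s s2 e tauW adm); last lia.
move=> t tH et o o_lt; have t_lt : (t < (i + T).+1)%N by [].
have := forallP consistent_s' (Ordinal t_lt).
rewrite /y /chan_out /= (negbTE et) /= => /eqP[].
rewrite (stream_enc_src _ _ s) // (stream_enc_src _ _ s2) => [/rowP/(_ (Ordinal o_lt))|m'].
  by rewrite !mxE.
by rewrite /s2 ifT //; have := ltn_ord m'; lia.
Qed.

End Streaming.

Section Rate.
Local Open Scope ring_scope.

Lemma rate_margin (tau B N : nat) : (0 < B)%N -> (0 < N)%N -> (N <= tau.+1)%N ->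
  let R : rat := (src_dim tau N)%:R / (pkt_dim tau B N)%:R in
  R / (1 - R) * B%:R + N%:R > tau%:R.
Proof.
move=> B_gt0 N_gt0 N_le /=; rewrite /pkt_dim /src_dim !natrD !natrM.
have -> : (nblocks tau N)%:R = tau%:R + 1 - N%:R :> rat.
  by rewrite /nblocks natrB // -addn1 natrD.
have ge0 := ler0n rat tau; have N_pos : 0 < N%:R :> rat by rewrite ltr0n.
have B_pos : 0 < B%:R :> rat by rewrite ltr0n.
have N_le' : N%:R <= tau%:R + 1 :> rat by rewrite natr1 ler_nat.
rewrite (_ : _ / _ * _ + _ = tau%:R + N%:R / (tau%:R + 1)); last first.
  field; apply/and3P; split; apply: lt0r_neq0; nra.
by rewrite ltrDl divr_gt0 //; lra.
Qed.

End Rate.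

Theorem theorem2 (N B W T : nat) :
  0 < N -> 0 < B -> 0 < W -> 0 < T ->
  N <= B -> B + 1 <= W -> B <= T ->
  exists (F : finFieldType) (k n : nat) (f : encoder F k n) (g : decoder F k n T),
    0 < n /\ has_delay_over N B W f g /\
    let R : rat := (k%:R / n%:R)%R in
    ((R / (1 - R)) * B%:R + N%:R > (T_eff T W)%:R)%R.
Proof.
move=> N_gt0 B_gt0 _ _ N_le_B B_lt_W B_le_T.
set tau := T_eff T W.
have B_le_tau : B <= tau by rewrite /tau /T_eff; lia.
have tau_le_T : tau <= T by rewrite /tau /T_eff; lia.
have tau_lt_W : tau < W by rewrite /tau /T_eff; lia.
have [p tau_lt_p p_prime] := prime_above tau.
have tau_lt_F : tau < #|'F_p| by rewrite card_Fp.
exists 'F_p, (src_dim tau N), (pkt_dim tau B N),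
  (stream_enc tau B N), (stream_dec tau B N T).
split; first by rewrite /pkt_dim /src_dim /nblocks; nia.
split; last by apply: rate_margin; lia.
move=> s e adm i.
exact: (stream_dec_correct tau B N T N_gt0 N_le_B B_le_tau tau_lt_F W s e tau_le_T tau_lt_W adm).
Qed.
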